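(* Every epimorphism $E\colon\mathbf{B}\to\mathbf{C}$ in $\mathbf{Lens}$ is a coequaliser in $\mathbf{Lens}$ of its proxy kernel pair, and so is a regular epimorphism in $\mathbf{Lens}$.
   Context: A lens $F\colon \mathbf{A}\to\mathbf{B}$ between small categories consists of a functor $F\colon\mathbf{A}\to\mathbf{B}$ (the get functor) together with, for each object $A$ of $\mathbf{A}$, a function $\varphi_{F,A}$ from the set of morphisms of $\mathbf{B}$ with domain $FA$ to the set of morphisms of $\mathbf{A}$ with domain $A$, such that: $F(\varphi_{F,A}b)=b$; $\varphi_{F,A}(\mathrm{id}_{FA})=\mathrm{id}_A$; and $\varphi_{F,A}(b'\circ b)=\varphi_{F,A'}(b')\circ\varphi_{F,A}(b)$ whenever $b$ has domain $FA$, $A'$ is the codomain of $\varphi_{F,A}b$, and $b'$ has domain $FA'$. $\mathbf{Lens}$ is the category of small categories and lenses, with composite of $F\colon\mathbf{A}\to\mathbf{B}$, $G\colon\mathbf{B}\to\mathbf{C}$ having get functor $G\circ F$ and puts $\varphi_{G\circ F,A}(c)=\varphi_{F,A}(\varphi_{G,FA}(c))$. The proxy kernel pair of a lens $E\colon\mathbf{B}\to\mathbf{C}$ is the pair of lenses $P_1,P_2\colon\mathbf{K}\to\mathbf{B}$ where $\mathbf{K}$ is the pullback in $\mathbf{Cat}$ of the get functor of $E$ along itself, whose objects and morphisms are pairs $\langle x,y\rangle$ with $Ex=Ey$, the get functors of $P_1,P_2$ are the two projections, and the puts are, for each object $K$ of $\mathbf{K}$ and morphism $b$ of $\mathbf{B}$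 with appropriate domain, $\varphi_{P_1,K}(b)=\langle b,\varphi_{E,P_2K}(Eb)\rangle$ and $\varphi_{P_2,K}(b)=\langle\varphi_{E,P_1K}(Eb),b\rangle$. *)

From Stdlib Require Import ProofIrrelevance.
Set Implicit Arguments.

Unset Implicit Arguments.
Record Cat : Type := mkCat {
  Ob : Type;
  Mor : Type;
  dom : Mor -> Ob;
  cod : Mor -> Ob;
  idm : Ob -> Mor;
  comp : forall g f : Mor, cod f = dom g -> Mor;
  dom_id : forall a, dom (idm a) = a;
  cod_id : forall a, cod (idm a) = a;
  dom_comp : forall g f (h : cod f = dom g), dom (comp g f h) = dom f;
  cod_comp : forall g f (h : cod f = dom g), cod (comp g f h) = cod g;
  comp_id_r : forall f (h : cod (idm (dom f)) = dom f), comp f (idm (dom f)) h = f;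
  comp_id_l : forall f (h : cod f = dom (idm (cod f))), comp (idm (cod f)) f h = f;
  comp_assoc : forall h g f (p : cod f = dom g) (q : cod g = dom h)
     (r : cod (comp g f p) = dom h) (s : cod f = dom (comp h g q)),
     comp h (comp g f p) r = comp (comp h g q) f s
}.
Set Implicit Arguments.
Arguments dom {c} _.
Arguments cod {c} _.
Arguments idm {c} _.
Arguments comp {c} g f _.

Lemma comp_congr (A : Cat) (g1 g2 f1 f2 : Mor A) p1 p2 :
  g1 = g2 -> f1 = f2 -> comp g1 f1 p1 = comp g2 f2 p2.
Proof. intros -> ->. f_equal. apply proof_irrelevance. Qed.

Lemma sig_ext (X : Type) (P : X -> Prop) (x y : sig P) :
  proj1_sig x = proj1_sig y -> x = y.
Proof.
  destruct x as [x px], y as [y py]; simpl; intros ->.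
  f_equal; apply proof_irrelevance.
Qed.

Unset Implicit Arguments.
Record Functor (A B : Cat) := mkFunctor {
  fob : Ob A -> Ob B;
  fmor : Mor A -> Mor B;
  fdom : forall f, dom (fmor f) = fob (dom f);
  fcod : forall f, cod (fmor f) = fob (cod f);
  fid : forall a, fmor (idm a) = idm (fob a);
  fcomp : forall g f (h : cod f = dom g) (h' : cod (fmor f) = dom (fmor g)),
     fmor (comp g f h) = comp (fmor g) (fmor f) h'
}.
Set Implicit Arguments.
Arguments fob {A B} f _ : rename.
Arguments fmor {A B} f _ : rename.
Arguments fdom {A B} f _ : rename.
Arguments fcod {A B} f _ : rename.
Arguments fid {A B} f _ : rename.
Arguments fcomp {A B} f g f0 h h' : rename.

Lemma fcod_dom (A B : Cat) (F : Functor A B) (g f : Mor A) (h : cod f = dom g) :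
  cod (fmor F f) = dom (fmor F g).
Proof. rewrite fcod, fdom, h. reflexivity. Qed.

Definition fcompose (A B C : Cat) (F : Functor A B) (G : Functor B C) : Functor A C.
Proof.
  refine (@mkFunctor A C (fun a => fob G (fob F a)) (fun f => fmor G (fmor F f)) _ _ _ _).
  - intros f. rewrite fdom, fdom. reflexivity.
  - intros f. rewrite fcod, fcod. reflexivity.
  - intros a. rewrite fid, fid. reflexivity.
  - intros g f h h'. rewrite (fcomp F g f h (fcod_dom F g f h)). apply fcomp.
Defined.

(* A lens: a get functor together with puts phi_A, defined on morphisms b
   with dom b = F A (the proof is an argument). *)
Unset Implicit Arguments.
Record Lens (A B : Cat) := mkLens {
  lget : Functor A B;
  lput : forall (a : Ob A) (b : Mor B), dom b = fob lget a -> Mor A;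
  lput_dom : forall a b p, dom (lput a b p) = a;
  lput_get : forall a b p, fmor lget (lput a b p) = b;
  lput_id : forall a (p : dom (idm (fob lget a)) = fob lget a),
     lput a (idm (fob lget a)) p = idm a;
  lput_comp : forall a b b' (p : dom b = fob lget a)
     (q : dom b' = fob lget (cod (lput a b p)))
     (r : cod b = dom b')
     (s : dom (comp b' b r) = fob lget a)
     (t : cod (lput a b p) = dom (lput (cod (lput a b p)) b' q)),
     lput a (comp b' b r) s = comp (lput (cod (lput a b p)) b' q) (lput a b p) t
}.
Set Implicit Arguments.
Arguments lget {A B} l.
Arguments lput {A B} l a b _.
Arguments lput_dom {A B} l a b p.
Arguments lput_get {A B} l a b p.
Arguments lput_id {A B} l a p.
Arguments lput_comp {A B} l a b b' p q r s t.

Lemma lput_congr (A B : Cat) (L : Lens A B) a1 a2 b1 b2 p1 p2 :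
  a1 = a2 -> b1 = b2 -> lput L a1 b1 p1 = lput L a2 b2 p2.
Proof. intros -> ->. f_equal. apply proof_irrelevance. Qed.

Definition lens_eq (A B : Cat) (F G : Lens A B) : Prop :=
  (forall a, fob (lget F) a = fob (lget G) a) /\
  (forall f, fmor (lget F) f = fmor (lget G) f) /\
  (forall a b p q, lput F a b p = lput G a b q).

Definition lens_comp (A B C : Cat) (F : Lens A B) (G : Lens B C) : Lens A C.
Proof.
  refine (@mkLens A C (fcompose (lget F) (lget G))
    (fun a c p => lput F a (lput G (fob (lget F) a) c p) (lput_dom G _ c p)) _ _ _ _).
  - intros a c p. apply lput_dom.
  - intros a c p. simpl. rewrite lput_get, lput_get. reflexivity.
  - intros a p. simpl.
    transitivity (lput F a (idm (fob (lget F) a)) (dom_id _ _)).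
    + apply lput_congr; [reflexivity | apply lput_id].
    + apply lput_id.
  - intros a c c' p q r s t. simpl in *.
    set (pg := lput_dom G (fob (lget F) a) c p) in *.
    set (g := lput G (fob (lget F) a) c p) in *.
    set (fa := lput F a g pg) in *.
    assert (e1 : fob (lget F) (cod fa) = cod g).
    { rewrite <- (fcod (lget F)). unfold fa. rewrite lput_get. reflexivity. }
    assert (qG : dom c' = fob (lget G) (cod g)).
    { rewrite <- e1. exact q. }
    assert (tG : cod g = dom (lput G (cod g) c' qG)).
    { rewrite lput_dom. reflexivity. }
    pose proof (lput_comp G (fob (lget F) a) c c' p qG r s tG) as HG.
    fold g in HG.
    assert (pc : dom (comp (lput G (cod g) c' qG) g tG) = fob (lget F) a).
    { rewrite dom_comp. exact pg. }
    assert (qF : dom (lput G (cod g) c' qG) = fob (lget F) (cod fa)).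
    { rewrite lput_dom. symmetry. exact e1. }
    assert (tF : cod fa = dom (lput F (cod fa) (lput G (cod g) c' qG) qF)).
    { rewrite lput_dom. reflexivity. }
    transitivity (lput F a (comp (lput G (cod g) c' qG) g tG) pc).
    { apply lput_congr; [reflexivity | exact HG]. }
    etransitivity; [apply (lput_comp F a g (lput G (cod g) c' qG) pg qF tG pc tF)|].
    apply comp_congr; [|reflexivity].
    apply lput_congr; [reflexivity|].
    apply lput_congr; [symmetry; exact e1 | reflexivity].
Defined.

Definition KOb (B C : Cat) (E : Lens B C) : Type :=
  { xy : Ob B * Ob B | fob (lget E) (fst xy) = fob (lget E) (snd xy) }.
Definition KMor (B C : Cat) (E : Lens B C) : Type :=
  { fg : Mor B * Mor B | fmor (lget E) (fst fg) = fmor (lget E) (snd fg) }.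

Lemma kdom_pf (B C : Cat) (E : Lens B C) (k : KMor E) :
  fob (lget E) (dom (fst (proj1_sig k))) = fob (lget E) (dom (snd (proj1_sig k))).
Proof. rewrite <- !fdom, (proj2_sig k). reflexivity. Qed.
Lemma kcod_pf (B C : Cat) (E : Lens B C) (k : KMor E) :
  fob (lget E) (cod (fst (proj1_sig k))) = fob (lget E) (cod (snd (proj1_sig k))).
Proof. rewrite <- !fcod, (proj2_sig k). reflexivity. Qed.

Definition kdom (B C : Cat) (E : Lens B C) (k : KMor E) : KOb E :=
  exist _ (dom (fst (proj1_sig k)), dom (snd (proj1_sig k))) (kdom_pf k).
Definition kcod (B C : Cat) (E : Lens B C) (k : KMor E) : KOb E :=
  exist _ (cod (fst (proj1_sig k)), cod (snd (proj1_sig k))) (kcod_pf k).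

Lemma kid_pf (B C : Cat) (E : Lens B C) (x : KOb E) :
  fmor (lget E) (idm (fst (proj1_sig x))) = fmor (lget E) (idm (snd (proj1_sig x))).
Proof. rewrite !fid, (proj2_sig x). reflexivity. Qed.
Definition kid (B C : Cat) (E : Lens B C) (x : KOb E) : KMor E :=
  exist _ (idm (fst (proj1_sig x)), idm (snd (proj1_sig x))) (kid_pf x).

Definition kh1 (B C : Cat) (E : Lens B C) (k' k : KMor E) (h : kcod k = kdom k') :
  cod (fst (proj1_sig k)) = dom (fst (proj1_sig k')) :=
  f_equal (fun x : KOb E => fst (proj1_sig x)) h.
Definition kh2 (B C : Cat) (E : Lens B C) (k' k : KMor E) (h : kcod k = kdom k') :
  cod (snd (proj1_sig k)) = dom (snd (proj1_sig k')) :=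
  f_equal (fun x : KOb E => snd (proj1_sig x)) h.

Lemma kcomp_pf (B C : Cat) (E : Lens B C) (k' k : KMor E) (h : kcod k = kdom k') :
  fmor (lget E) (comp (fst (proj1_sig k')) (fst (proj1_sig k)) (kh1 h))
  = fmor (lget E) (comp (snd (proj1_sig k')) (snd (proj1_sig k)) (kh2 h)).
Proof.
  rewrite (fcomp (lget E) _ _ (kh1 h) (fcod_dom _ _ _ (kh1 h))).
  rewrite (fcomp (lget E) _ _ (kh2 h) (fcod_dom _ _ _ (kh2 h))).
  apply comp_congr; [exact (proj2_sig k') | exact (proj2_sig k)].
Qed.
Definition kcomp (B C : Cat) (E : Lens B C) (k' k : KMor E) (h : kcod k = kdom k') : KMor E :=
  exist _ (comp (fst (proj1_sig k')) (fst (proj1_sig k)) (kh1 h),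
           comp (snd (proj1_sig k')) (snd (proj1_sig k)) (kh2 h)) (kcomp_pf h).

(* The pullback K of the get functor of E along itself. *)
Definition KCat (B C : Cat) (E : Lens B C) : Cat.
Proof.
  refine (@mkCat (KOb E) (KMor E) (@kdom B C E) (@kcod B C E) (@kid B C E) (@kcomp B C E)
            _ _ _ _ _ _ _).
  - intros [[x y] e]. apply sig_ext. simpl. rewrite !dom_id. reflexivity.
  - intros [[x y] e]. apply sig_ext. simpl. rewrite !cod_id. reflexivity.
  - intros g f h. apply sig_ext. simpl. rewrite !dom_comp. reflexivity.
  - intros g f h. apply sig_ext. simpl. rewrite !cod_comp. reflexivity.
  - intros [[f g] e] h. apply sig_ext. simpl. f_equal; apply comp_id_r.
  - intros [[f g] e] h. apply sig_ext. simpl. f_equal; apply comp_id_l.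
  - intros h g f p q r s. apply sig_ext. simpl. f_equal; apply comp_assoc.
Defined.

Definition kproj1 (B C : Cat) (E : Lens B C) : Functor (KCat E) B.
Proof.
  refine (@mkFunctor (KCat E) B (fun x => fst (proj1_sig x)) (fun k => fst (proj1_sig k))
            _ _ _ _); try reflexivity.
  intros g f h h'. apply comp_congr; reflexivity.
Defined.
Definition kproj2 (B C : Cat) (E : Lens B C) : Functor (KCat E) B.
Proof.
  refine (@mkFunctor (KCat E) B (fun x => snd (proj1_sig x)) (fun k => snd (proj1_sig k))
            _ _ _ _); try reflexivity.
  intros g f h h'. apply comp_congr; reflexivity.
Defined.

Lemma p1_dom_pf (B C : Cat) (E : Lens B C) (x : KOb E) (b : Mor B)
  (p : dom b = fst (proj1_sig x)) :
  dom (fmor (lget E) b) = fob (lget E) (snd (proj1_sig x)).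
Proof. rewrite fdom, p. exact (proj2_sig x). Qed.
Arguments p1_dom_pf {B C E x b} p.
Lemma p1_put_pf (B C : Cat) (E : Lens B C) (x : KOb E) (b : Mor B)
  (p : dom b = fst (proj1_sig x)) :
  fmor (lget E) b = fmor (lget E) (lput E (snd (proj1_sig x)) (fmor (lget E) b) (p1_dom_pf p)).
Proof. rewrite lput_get. reflexivity. Qed.
Arguments p1_put_pf {B C E x b} p.
Definition p1_put (B C : Cat) (E : Lens B C) (x : KOb E) (b : Mor B)
  (p : dom b = fst (proj1_sig x)) : KMor E :=
  exist _ (b, lput E (snd (proj1_sig x)) (fmor (lget E) b) (p1_dom_pf p)) (p1_put_pf p).

Lemma p2_dom_pf (B C : Cat) (E : Lens B C) (x : KOb E) (b : Mor B)
  (p : dom b = snd (proj1_sig x)) :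
  dom (fmor (lget E) b) = fob (lget E) (fst (proj1_sig x)).
Proof. rewrite fdom, p. symmetry. exact (proj2_sig x). Qed.
Arguments p2_dom_pf {B C E x b} p.
Lemma p2_put_pf (B C : Cat) (E : Lens B C) (x : KOb E) (b : Mor B)
  (p : dom b = snd (proj1_sig x)) :
  fmor (lget E) (lput E (fst (proj1_sig x)) (fmor (lget E) b) (p2_dom_pf p)) = fmor (lget E) b.
Proof. rewrite lput_get. reflexivity. Qed.
Arguments p2_put_pf {B C E x b} p.
Definition p2_put (B C : Cat) (E : Lens B C) (x : KOb E) (b : Mor B)
  (p : dom b = snd (proj1_sig x)) : KMor E :=
  exist _ (lput E (fst (proj1_sig x)) (fmor (lget E) b) (p2_dom_pf p), b) (p2_put_pf p).

Definition proxy_P1 (B C : Cat) (E : Lens B C) : Lens (KCat E) B.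
Proof.
  refine (@mkLens (KCat E) B (kproj1 E) (@p1_put B C E) _ _ _ _).
  - intros [[x y] e] b p. apply sig_ext. simpl in *.
    rewrite lput_dom, p. reflexivity.
  - reflexivity.
  - intros [[x y] e] p. apply sig_ext. simpl in *. f_equal.
    transitivity (lput E y (idm (fob (lget E) y)) (dom_id _ _)).
    + apply lput_congr; [reflexivity|]. rewrite fid, e. reflexivity.
    + apply lput_id.
  - intros [[x y] e] b b' p q r s t. apply sig_ext. simpl in *. f_equal.
    + apply comp_congr; reflexivity.
    + set (l := lput E y (fmor (lget E) b) (p1_dom_pf (x:=exist _ (x, y) e) p)) in *.
      assert (r' : cod (fmor (lget E) b) = dom (fmor (lget E) b')).
      { apply fcod_dom. exact r. }
      assert (s' : dom (comp (fmor (lget E) b') (fmor (lget E) b) r') = fob (lget E) y).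
      { rewrite dom_comp, fdom, p. exact e. }
      assert (q' : dom (fmor (lget E) b') = fob (lget E) (cod l)).
      { rewrite fdom, q. rewrite <- !fcod. unfold l. rewrite lput_get. reflexivity. }
      assert (t' : cod l = dom (lput E (cod l) (fmor (lget E) b') q')).
      { rewrite lput_dom. reflexivity. }
      transitivity (lput E y (comp (fmor (lget E) b') (fmor (lget E) b) r') s').
      { apply lput_congr; [reflexivity|]. apply fcomp. }
      etransitivity; [apply (lput_comp E y (fmor (lget E) b) (fmor (lget E) b') _ q' r' s' t')|].
      apply comp_congr; [|reflexivity].
      apply lput_congr; reflexivity.
Defined.

Definition proxy_P2 (B C : Cat) (E : Lens B C) : Lens (KCat E) B.
Proof.
  refine (@mkLens (KCat E) B (kproj2 E) (@p2_put B C E) _ _ _ _).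
  - intros [[x y] e] b p. apply sig_ext. simpl in *.
    rewrite lput_dom, p. reflexivity.
  - reflexivity.
  - intros [[x y] e] p. apply sig_ext. simpl in *. f_equal.
    transitivity (lput E x (idm (fob (lget E) x)) (dom_id _ _)).
    + apply lput_congr; [reflexivity|]. rewrite fid, e. reflexivity.
    + apply lput_id.
  - intros [[x y] e] b b' p q r s t. apply sig_ext. simpl in *. f_equal.
    + set (l := lput E x (fmor (lget E) b) (p2_dom_pf (x:=exist _ (x, y) e) p)) in *.
      assert (r' : cod (fmor (lget E) b) = dom (fmor (lget E) b')).
      { apply fcod_dom. exact r. }
      assert (s' : dom (comp (fmor (lget E) b') (fmor (lget E) b) r') = fob (lget E) x).
      { rewrite dom_comp, fdom, p. symmetry. exact e. }
      assert (q' : dom (fmor (lget E) b') = fob (lget E) (cod l)).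
      { rewrite fdom, q. rewrite <- !fcod. unfold l. rewrite lput_get. reflexivity. }
      assert (t' : cod l = dom (lput E (cod l) (fmor (lget E) b') q')).
      { rewrite lput_dom. reflexivity. }
      transitivity (lput E x (comp (fmor (lget E) b') (fmor (lget E) b) r') s').
      { apply lput_congr; [reflexivity|]. apply fcomp. }
      etransitivity; [apply (lput_comp E x (fmor (lget E) b) (fmor (lget E) b') _ q' r' s' t')|].
      apply comp_congr; [|reflexivity].
      apply lput_congr; reflexivity.
    + apply comp_congr; reflexivity.
Defined.

Definition lens_epi (B C : Cat) (E : Lens B C) : Prop :=
  forall (D : Cat) (G H : Lens C D),
    lens_eq (lens_comp E G) (lens_comp E H) -> lens_eq G H.

Definition lens_coequaliser (K B C : Cat) (P1 P2 : Lens K B) (E : Lens B C) : Prop :=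
  lens_eq (lens_comp P1 E) (lens_comp P2 E) /\
  forall (D : Cat) (G : Lens B D),
    lens_eq (lens_comp P1 G) (lens_comp P2 G) ->
    exists H : Lens C D,
      lens_eq (lens_comp E H) G /\
      (forall H' : Lens C D, lens_eq (lens_comp E H') G -> lens_eq H' H).

Definition lens_regular_epi (B C : Cat) (E : Lens B C) : Prop :=
  exists (K : Cat) (P1 P2 : Lens K B), lens_coequaliser P1 P2 E.

(* An epimorphism E : B -> C of Lens is surjective on objects.  Its image is
   closed under postcomposition (lift along the puts of E), so the objects
   outside it are closed under precomposition; duplicating them yields two
   lenses out of C that differ exactly there and agree after E.
   A lens G coequalising the proxy kernel pair is constant on the fibres of E,
   on objects and on morphisms, and its puts at E-equivalent objects b, b'
   are related by phi_{G,b} d = phi_{E,b} (E (phi_{G,b'} d)).  Choosing a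
   preimage s c of every object c, the assignments c |-> G (s c),
   f |-> G (phi_{E,s(dom f)} f), with puts d |-> E (phi_{G,s c} d), then form
   a lens Q with E;Q = G, unique because E is epi. *)
From Stdlib Require Import ProofIrrelevance ClassicalEpsilon Bool.
Set Implicit Arguments.

Lemma lens_eq_sym (A B : Cat) (F G : Lens A B) : lens_eq F G -> lens_eq G F.
Proof. intros [hob [hmor hput]]. split; [|split]; intros; symmetry; auto. Qed.

Lemma lens_eq_trans (A B : Cat) (F G H : Lens A B) :
  lens_eq F G -> lens_eq G H -> lens_eq F H.
Proof.
  intros [hob [hmor hput]] [kob [kmor kput]]. split; [|split]; intros.
  - rewrite hob; auto.
  - rewrite hmor; auto.
  - assert (p' : dom b = fob (lget G) a) by (rewrite <- hob; exact p).
    rewrite (hput a b p p'); auto.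
Qed.

Lemma lens_image_postcomp (B C : Cat) (E : Lens B C) (f : Mor C) :
  (exists b, fob (lget E) b = dom f) -> exists b, fob (lget E) b = cod f.
Proof.
  intros [b hb]. exists (cod (lput E b f (eq_sym hb))).
  rewrite <- fcod, lput_get. reflexivity.
Qed.

Section Doubling.

Variable C : Cat.
Variable chi : Ob C -> bool.
Hypothesis chi_precomp : forall f : Mor C, chi (cod f) = true -> chi (dom f) = true.

(* The flag [true] marks the duplicate of an object (resp. of a morphism out
   of an object) satisfying [chi]; a duplicated morphism lands in the
   duplicate of its codomain when there is one. *)
Definition dbl_ob := { p : Ob C * bool | snd p = true -> chi (fst p) = true }.
Definition dbl_mor := { p : Mor C * bool | snd p = true -> chi (dom (fst p)) = true }.

Definition dbl_dom (m : dbl_mor) : dbl_ob :=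
  exist _ (dom (fst (proj1_sig m)), snd (proj1_sig m)) (proj2_sig m).

Definition dbl_cod (m : dbl_mor) : dbl_ob :=
  exist (fun p : Ob C * bool => snd p = true -> chi (fst p) = true)
    (cod (fst (proj1_sig m)), andb (snd (proj1_sig m)) (chi (cod (fst (proj1_sig m)))))
    (fun h => proj2 (andb_prop _ _ h)).

Lemma dbl_id_pf (o : dbl_ob) :
  snd (idm (fst (proj1_sig o)), snd (proj1_sig o)) = true ->
  chi (dom (fst (idm (fst (proj1_sig o)), snd (proj1_sig o)))) = true.
Proof. simpl. rewrite dom_id. exact (proj2_sig o). Qed.

Definition dbl_id (o : dbl_ob) : dbl_mor := exist _ _ (dbl_id_pf o).

Definition dbl_composable (g f : dbl_mor) (h : dbl_cod f = dbl_dom g) :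
  cod (fst (proj1_sig f)) = dom (fst (proj1_sig g)) :=
  f_equal (fun o : dbl_ob => fst (proj1_sig o)) h.

Lemma dbl_comp_pf (g f : dbl_mor) (h : dbl_cod f = dbl_dom g) :
  snd (comp (fst (proj1_sig g)) (fst (proj1_sig f)) (dbl_composable h), snd (proj1_sig f))
    = true ->
  chi (dom (fst (comp (fst (proj1_sig g)) (fst (proj1_sig f)) (dbl_composable h),
                 snd (proj1_sig f)))) = true.
Proof. simpl. rewrite dom_comp. exact (proj2_sig f). Qed.

Definition dbl_comp (g f : dbl_mor) (h : dbl_cod f = dbl_dom g) : dbl_mor :=
  exist _ _ (dbl_comp_pf h).

Lemma dbl_cod_comp (g f : dbl_mor) (h : dbl_cod f = dbl_dom g) :
  dbl_cod (dbl_comp h) = dbl_cod g.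
Proof.
  destruct g as [[g j] pg], f as [[f i] pf]. apply sig_ext. simpl.
  pose proof (f_equal (fun o : dbl_ob => snd (proj1_sig o)) h) as hflag.
  pose proof (f_equal (fun o : dbl_ob => fst (proj1_sig o)) h) as hfg.
  simpl in hflag, hfg.
  rewrite cod_comp. f_equal. rewrite <- hflag.
  destruct (chi (cod g)) eqn:hg.
  - assert (hf : chi (cod f) = true) by (rewrite hfg; exact (chi_precomp g hg)).
    rewrite hf. destruct i; reflexivity.
  - destruct i, (chi (cod f)); reflexivity.
Qed.

Definition doubled : Cat.
Proof.
  refine (@mkCat dbl_ob dbl_mor dbl_dom dbl_cod dbl_id dbl_comp
            _ _ _ dbl_cod_comp _ _ _).
  - intros [[x i] e]. apply sig_ext. simpl. rewrite dom_id. reflexivity.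
  - intros [[x i] e]. apply sig_ext. simpl in *. rewrite cod_id. f_equal.
    destruct i; simpl; [rewrite (e eq_refl)|]; reflexivity.
  - intros g f h. apply sig_ext. simpl. rewrite dom_comp. reflexivity.
  - intros [[f i] e] h. apply sig_ext. simpl. f_equal. apply comp_id_r.
  - intros [[f i] e] h. apply sig_ext. simpl. f_equal. apply comp_id_l.
  - intros h g f p q r s. apply sig_ext. simpl. f_equal. apply comp_assoc.
Defined.

Definition into_base : Functor C doubled.
Proof.
  refine (@mkFunctor C doubled
    (fun c => exist (fun p : Ob C * bool => snd p = true -> chi (fst p) = true)
                (c, false) (fun h => False_ind _ (diff_false_true h)))
    (fun f => exist (fun p : Mor C * bool => snd p = true -> chi (dom (fst p)) = true)
                (f, false) (fun h => False_ind _ (diff_false_true h)))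
    _ _ _ _); intros; apply sig_ext; try reflexivity.
  simpl. f_equal. apply comp_congr; reflexivity.
Defined.

Definition into_copy : Functor C doubled.
Proof.
  refine (@mkFunctor C doubled
    (fun c => exist (fun p : Ob C * bool => snd p = true -> chi (fst p) = true)
                (c, chi c) (fun e : chi c = true => e))
    (fun f => exist (fun p : Mor C * bool => snd p = true -> chi (dom (fst p)) = true)
                (f, chi (dom f)) (fun e : chi (dom f) = true => e))
    _ _ _ _).
  - intros f. apply sig_ext. reflexivity.
  - intros f. apply sig_ext. simpl. f_equal.
    destruct (chi (cod f)) eqn:hc.
    + rewrite (chi_precomp f hc). reflexivity.
    + destruct (chi (dom f)); reflexivity.
  - intros a. apply sig_ext. simpl. rewrite dom_id. reflexivity.
  - intros g f h h'. apply sig_ext. simpl. rewrite dom_comp. f_equal.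
    apply comp_congr; reflexivity.
Defined.

(* Both functors are bijective on morphisms out of each object, so their puts
   just forget the flag. *)
Definition into_base_lens : Lens C doubled.
Proof.
  refine (@mkLens C doubled into_base (fun c d p => fst (proj1_sig d)) _ _ _ _).
  - intros a d p. exact (f_equal (fun o : dbl_ob => fst (proj1_sig o)) p).
  - intros a [[d i] e] p. apply sig_ext. simpl.
    pose proof (f_equal (fun o : dbl_ob => snd (proj1_sig o)) p) as hflag.
    simpl in hflag. rewrite hflag. reflexivity.
  - reflexivity.
  - intros. apply comp_congr; reflexivity.
Defined.

Definition into_copy_lens : Lens C doubled.
Proof.
  refine (@mkLens C doubled into_copy (fun c d p => fst (proj1_sig d)) _ _ _ _).
  - intros a d p. exact (f_equal (fun o : dbl_ob => fst (proj1_sig o)) p).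
  - intros a [[d i] e] p. apply sig_ext. simpl.
    pose proof (f_equal (fun o : dbl_ob => snd (proj1_sig o)) p) as hflag.
    pose proof (f_equal (fun o : dbl_ob => fst (proj1_sig o)) p) as hob.
    simpl in hflag, hob. rewrite hob, hflag. reflexivity.
  - reflexivity.
  - intros. apply comp_congr; reflexivity.
Defined.

Lemma lens_epi_disjoint_sieve_empty (B : Cat) (E : Lens B C) :
  lens_epi E -> (forall b, chi (fob (lget E) b) = false) -> forall c, chi c = false.
Proof.
  intros epi hE c.
  destruct (epi _ into_base_lens into_copy_lens) as [hob _].
  - split; [|split].
    + intros a. apply sig_ext. simpl. rewrite hE. reflexivity.
    + intros f. apply sig_ext. simpl. rewrite fdom, hE. reflexivity.
    + intros a b p q. simpl. apply lput_congr; reflexivity.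
  - exact (eq_sym (f_equal (fun o : dbl_ob => snd (proj1_sig o)) (hob c))).
Qed.

End Doubling.

Lemma lens_epi_surjective (B C : Cat) (E : Lens B C) :
  lens_epi E -> forall c, exists b, fob (lget E) b = c.
Proof.
  intros epi.
  pose (outside c := if excluded_middle_informative (exists b, fob (lget E) b = c)
                     then false else true).
  assert (outside_precomp : forall f, outside (cod f) = true -> outside (dom f) = true).
  { intros f. unfold outside.
    destruct (excluded_middle_informative (exists b, fob (lget E) b = dom f)) as [hdom|];
      [|reflexivity].
    destruct excluded_middle_informative as [|hcod]; [discriminate|].
    destruct hcod. exact (lens_image_postcomp _ _ hdom). }
  intros c. pose proof (lens_epi_disjoint_sieve_empty outside outside_precomp epi) as hempty.
  assert (hc : outside c = false).
  { apply hempty. intros b. unfold outside.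
    destruct excluded_middle_informative as [|hb]; [reflexivity|].
    destruct hb. exists b. reflexivity. }
  unfold outside in hc. destruct excluded_middle_informative; [assumption|discriminate].
Qed.

Lemma proxy_kernel_coequalises (B C : Cat) (E : Lens B C) :
  lens_eq (lens_comp (proxy_P1 E) E) (lens_comp (proxy_P2 E) E).
Proof.
  split; [intros [[x y] e]; exact e | split; [intros [[f g] e]; exact e|]].
  intros [[x y] e] c p q. apply sig_ext. simpl.
  f_equal; apply lput_congr; auto; rewrite lput_get; reflexivity.
Qed.

Section Factorisation.

Variables B C D : Cat.
Variable E : Lens B C.
Variable G : Lens B D.
Hypothesis G_coeq : lens_eq (lens_comp (proxy_P1 E) G) (lens_comp (proxy_P2 E) G).

Lemma coeq_fob b b' : fob (lget E) b = fob (lget E) b' -> fob (lget G) b = fob (lget G) b'.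
Proof. intros e. exact (proj1 G_coeq (exist _ (b, b') e)). Qed.

Lemma coeq_fmor f f' :
  fmor (lget E) f = fmor (lget E) f' -> fmor (lget G) f = fmor (lget G) f'.
Proof. intros e. exact (proj1 (proj2 G_coeq) (exist _ (f, f') e)). Qed.

Lemma coeq_lput {b b'} (e : fob (lget E) b = fob (lget E) b') d
  (p : dom d = fob (lget G) b) (p' : dom d = fob (lget G) b')
  (r : dom (fmor (lget E) (lput G b' d p')) = fob (lget E) b) :
  lput G b d p = lput E b (fmor (lget E) (lput G b' d p')) r.
Proof.
  pose proof (proj2 (proj2 G_coeq) (exist _ (b, b') e) d p p') as hput.
  apply (f_equal (fun k : KMor E => fst (proj1_sig k))) in hput. simpl in hput.
  rewrite hput. apply lput_congr; reflexivity.
Qed.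

Hypothesis E_surj : forall c, exists b, fob (lget E) b = c.

Definition preimage (c : Ob C) : Ob B :=
  proj1_sig (constructive_indefinite_description _ (E_surj c)).

Lemma preimageK c : fob (lget E) (preimage c) = c.
Proof. unfold preimage. destruct constructive_indefinite_description; auto. Qed.

Definition lift (f : Mor C) : Mor B :=
  lput E (preimage (dom f)) f (eq_sym (preimageK (dom f))).

Lemma lift_get f : fmor (lget E) (lift f) = f.
Proof. apply lput_get. Qed.

Lemma factor_fcomp (g f : Mor C) (h : cod f = dom g)
  (h' : cod (fmor (lget G) (lift f)) = dom (fmor (lget G) (lift g))) :
  fmor (lget G) (lift (comp g f h))
  = comp (fmor (lget G) (lift g)) (fmor (lget G) (lift f)) h'.
Proof.
  set (ft := lift f).
  assert (pg : dom g = fob (lget E) (cod ft)).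
  { rewrite <- fcod. unfold ft. rewrite lift_get. symmetry; exact h. }
  set (gt := lput E (cod ft) g pg).
  assert (hc : cod ft = dom gt) by (unfold gt; rewrite lput_dom; reflexivity).
  transitivity (fmor (lget G) (comp gt ft hc)).
  - apply coeq_fmor. rewrite lift_get.
    rewrite (fcomp (lget E) gt ft hc (fcod_dom _ _ _ hc)).
    apply comp_congr; [unfold gt; rewrite lput_get | unfold ft; rewrite lift_get]; reflexivity.
  - rewrite (fcomp (lget G) gt ft hc (fcod_dom _ _ _ hc)).
    apply comp_congr; [|reflexivity].
    apply coeq_fmor. unfold gt. rewrite lput_get, lift_get. reflexivity.
Qed.

Definition factor_functor : Functor C D.
Proof.
  refine (@mkFunctor C D (fun c => fob (lget G) (preimage c))
     (fun f => fmor (lget G) (lift f)) _ _ _ factor_fcomp).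
  - intros f. rewrite fdom. unfold lift. rewrite lput_dom. reflexivity.
  - intros f. rewrite fcod. apply coeq_fob.
    rewrite <- fcod, lift_get, preimageK. reflexivity.
  - intros a. rewrite <- fid. apply coeq_fmor.
    rewrite lift_get, fid, preimageK. reflexivity.
Defined.

Lemma factor_lput_comp c d d' (p : dom d = fob (lget G) (preimage c))
  (q : dom d' = fob (lget G)
                  (preimage (cod (fmor (lget E) (lput G (preimage c) d p)))))
  (r : cod d = dom d') (s : dom (comp d' d r) = fob (lget G) (preimage c))
  (t : cod (fmor (lget E) (lput G (preimage c) d p))
       = dom (fmor (lget E) (lput G (preimage (cod (fmor (lget E) (lput G (preimage c) d p))))
                                 d' q))) :
  fmor (lget E) (lput G (preimage c) (comp d' d r) s)
  = comp (fmor (lget E) (lput G (preimage (cod (fmor (lget E) (lput G (preimage c) d p))))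
                               d' q))
         (fmor (lget E) (lput G (preimage c) d p)) t.
Proof.
  set (l := lput G (preimage c) d p) in *.
  assert (q' : dom d' = fob (lget G) (cod l)).
  { rewrite <- fcod. unfold l. rewrite lput_get. symmetry; exact r. }
  assert (t' : cod l = dom (lput G (cod l) d' q')) by (rewrite lput_dom; reflexivity).
  rewrite (lput_comp G (preimage c) d d' p q' r s t'). fold l.
  rewrite (fcomp (lget E) _ _ t' (fcod_dom _ _ _ t')).
  apply comp_congr; [|reflexivity].
  assert (e : fob (lget E) (cod l) = fob (lget E) (preimage (cod (fmor (lget E) l)))).
  { rewrite preimageK, fcod. reflexivity. }
  assert (rr : dom (fmor (lget E) (lput G (preimage (cod (fmor (lget E) l))) d' q))
               = fob (lget E) (cod l)).
  { rewrite fdom, lput_dom. symmetry; exact e. }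
  rewrite (coeq_lput e d' q' q rr), lput_get. reflexivity.
Qed.

Definition factor_lens : Lens C D.
Proof.
  refine (@mkLens C D factor_functor
            (fun c d p => fmor (lget E) (lput G (preimage c) d p)) _ _ _ factor_lput_comp).
  - intros c d p. rewrite fdom, lput_dom, preimageK. reflexivity.
  - intros c d p. simpl.
    transitivity (fmor (lget G) (lput G (preimage c) d p)); [|apply lput_get].
    apply coeq_fmor. rewrite lift_get. reflexivity.
  - intros c p. simpl.
    transitivity (fmor (lget E) (idm (preimage c))).
    + f_equal. etransitivity; [|apply (lput_id G (preimage c) (dom_id _ _))].
      apply lput_congr; reflexivity.
    + rewrite fid, preimageK. reflexivity.
Defined.

Lemma factor_lens_factors : lens_eq (lens_comp E factor_lens) G.
Proof.
  split; [|split].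
  - intros a. apply coeq_fob, preimageK.
  - intros f. apply coeq_fmor, lift_get.
  - intros a d p q. simpl in *.
    assert (e : fob (lget E) a = fob (lget E) (preimage (fob (lget E) a)))
      by (rewrite preimageK; reflexivity).
    assert (r : dom (fmor (lget E) (lput G (preimage (fob (lget E) a)) d p))
                = fob (lget E) a).
    { rewrite fdom, lput_dom. symmetry; exact e. }
    rewrite (coeq_lput e d q p r). apply lput_congr; reflexivity.
Qed.

End Factorisation.

Theorem corollary6p4 (B C : Cat) (E : Lens B C) :
  lens_epi E ->
  lens_coequaliser (proxy_P1 E) (proxy_P2 E) E /\ lens_regular_epi E.
Proof.
  intros epi.
  assert (coeq : lens_coequaliser (proxy_P1 E) (proxy_P2 E) E).
  { split; [apply proxy_kernel_coequalises|].
    intros D G hG. exists (factor_lens hG (lens_epi_surjective epi)).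
    split; [apply factor_lens_factors|].
    intros H' hH'. apply epi.
    exact (lens_eq_trans hH' (lens_eq_sym (factor_lens_factors _ _))). }
  split; [exact coeq|].
  exists (KCat E), (proxy_P1 E), (proxy_P2 E). exact coeq.
Qed.
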